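(* Let $(\mathbf X,\mathbf Y)$ be a general correlated source which is uniformly integrable and satisfies the conditional strong converse property $\underline H(\mathbf X|\mathbf Y)=\overline H(\mathbf X|\mathbf Y)$. Then the limit $H(\mathbf X|\mathbf Y)=\lim_{n\to\infty}\frac1nH(X^n|Y^n)$ exists, and for any $\varepsilon\in(0,1)$, \[\lim_{n\to\infty}\frac1n\overline H_s^\varepsilon(X^n|Y^n)=H(\mathbf X|\mathbf Y).\]
   Context: A general correlated source $(\mathbf X,\mathbf Y)=\{(X^n,Y^n)\}_{n\ge1}$ is an arbitrary sequence of pairs of random variables on $\mathcal X^n\times\mathcal Y^n$, $\mathcal X,\mathcal Y$ finite or countably infinite (no structural assumptions; marginal probabilities positive). Logs base 2. Uniformly integrable: $Z_n=\frac1n\log\frac1{P_{X^n|Y^n}(X^n|Y^n)}$ satisfies $\lim_{u\to\infty}\sup_n\sum_{z:|z|\ge u}P_{Z_n}(z)|z|=0$. $\overline H(\mathbf X|\mathbf Y)=\inf\{\alpha:\lim_n\Pr\{Z_n>\alpha\}=0\}$, $\underline H(\mathbf X|\mathbf Y)=\sup\{\beta:\lim_n\Pr\{Z_n<\beta\}=0\}$. For $x^n$ and $\varepsilon\in(0,1]$, $\overline h^\varepsilon(x^n)=\inf\{a\in\mathbb R:\sum_{y^n:\log(1/P_{X^n|Y^n}(x^n|y^n))>a}P_{Y^n|X^n}(y^n|x^n)\le\varepsilon\}$ and $\overline H_s^\varepsilon(X^n|Y^n)=\sum_{x^n}P_{X^n}(x^n)\overline h^\varepsilon(x^n)$. *)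

From HB Require Import structures.
From mathcomp Require Import all_boot all_order all_algebra.
From mathcomp Require Import all_classical all_reals all_analysis.
Set Implicit Arguments. Unset Strict Implicit. Unset Printing Implicit Defensive.
Import Order.TTheory GRing.Theory Num.Theory.
Import numFieldNormedType.Exports.
Local Open Scope classical_set_scope.
Local Open Scope ring_scope.

Section Defs.
Variable R : realType.
Variables X Y : countType.

(* A general correlated source: for each n, a joint pmf on X^n * Y^n. *)
Definition source := forall n : nat, n.-tuple X * n.-tuple Y -> R.

Definition is_source (P : source) : Prop :=
  forall n, (forall w, 0 <= P n w) /\ \esum_(w in [set: n.-tuple X * n.-tuple Y]) (P n w)%:E = 1%E.

Definition log2 (x : R) : R := ln x / ln 2.

(* marginals (as extended reals; finite for a pmf) *)
Definition PX (P : source) n (x : n.-tuple X) : R :=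
  fine (\esum_(y in [set: n.-tuple Y]) (P n (x, y))%:E).
Definition PY (P : source) n (y : n.-tuple Y) : R :=
  fine (\esum_(x in [set: n.-tuple X]) (P n (x, y))%:E).

Definition positive_marginals (P : source) : Prop :=
  forall n, (forall x : n.-tuple X, 0 < PX P x) /\ (forall y : n.-tuple Y, 0 < PY P y).

Definition PXgY (P : source) n (x : n.-tuple X) (y : n.-tuple Y) : R := P n (x, y) / PY P y.
Definition PYgX (P : source) n (y : n.-tuple Y) (x : n.-tuple X) : R := P n (x, y) / PX P x.

Definition Zn (P : source) n (w : n.-tuple X * n.-tuple Y) : R :=
  n%:R^-1 * log2 (PXgY P w.1 w.2)^-1.

Definition PrZ (P : source) n (A : set R) : \bar R :=
  \esum_(w in [set w | A (Zn P w)]) (P n w)%:E.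

Definition tailZ (P : source) n (u : R) : \bar R :=
  \esum_(w in [set w | u <= `|Zn P w|]) (P n w * `|Zn P w|)%:E.

Definition uniformly_integrable (P : source) : Prop :=
  (ereal_sup [set tailZ P n u | n in [set: nat]]) @[u --> +oo] --> 0%E.

Definition Hup (P : source) : \bar R :=
  ereal_inf [set a%:E | a in [set a : R | (PrZ P n [set z | a < z]) @[n --> \oo] --> 0%E]].
Definition Hlow (P : source) : \bar R :=
  ereal_sup [set b%:E | b in [set b : R | (PrZ P n [set z | z < b]) @[n --> \oo] --> 0%E]].

Definition condH (P : source) n : \bar R :=
  \esum_(w in [set: n.-tuple X * n.-tuple Y]) (P n w * log2 (PXgY P w.1 w.2)^-1)%:E.

Definition hbar (P : source) (eps : R) n (x : n.-tuple X) : \bar R :=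
  ereal_inf [set a%:E | a in [set a : R |
    (\esum_(y in [set y : n.-tuple Y | (a < log2 (PXgY P x y)^-1)%R]) (PYgX P y x)%:E
      <= eps%:E)%E]].

Definition Hs (P : source) (eps : R) n : \bar R :=
  \esum_(x in [set: n.-tuple X]) ((PX P x)%:E * hbar P eps x)%E.

End Defs.

From HB Require Import structures.
From mathcomp Require Import all_boot all_order all_algebra.
From mathcomp Require Import all_classical all_reals all_analysis.
From mathcomp Require Import ring lra.
Import Order.TTheory GRing.Theory Num.Theory.
Import numFieldNormedType.Exports.
Local Open Scope classical_set_scope.
Local Open Scope ring_scope.

(* Let Z_n be the normalised conditional self-information, so that
   n^-1 H(X^n|Y^n) = E[Z_n].  Markov-type estimates give, for 0 <= c <= c' and u >= 0,
     c (1 - Pr{Z_n < c'}) <= E[Z_n] <= c + u Pr{Z_n > c} + E[Z_n; Z_n >= u].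
   The strong converse property makes both probabilities vanish unless c is close to
   the common value H of the two spectral entropies, and uniform integrability makes
   the tail small uniformly in n; this squeezes E[Z_n] to H.
   The same scheme applies to n^-1 H_s^eps.  The x with hbar(x) <= n c contribute at
   most c P_X(x).  For the others Pr{Z_n > c | X^n = x} > eps, so they carry mass at
   most Pr{Z_n > c} / eps, and by Markov eps hbar(x) <= n E[Z_n | X^n = x], so their
   contribution is bounded by E[Z_n] restricted to a set of small probability.
   Conversely, hbar(x) < n c forces Pr{Z_n <= c | X^n = x} >= 1 - eps. *)

Lemma mulr_divD1_le (R : realFieldType) (a g : R) :
  0 <= a -> 0 <= g -> a * (g / (a + 1)) <= g.
Proof.
move=> a_ge0 g_ge0; have a1_gt0 : 0 < a + 1 by lra.
by rewrite mulrA ler_pdivrMr //; nra.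
Qed.

Lemma log2_inv_ge0 (R : realType) (r : R) : 0 <= r -> r <= 1 -> 0 <= log2 r^-1.
Proof.
move=> r_ge0 r_le1; rewrite /log2 divr_ge0 //; last by rewrite ltW // ln_gt0 // ltr1n.
have [->|r_neq0] := eqVneq r 0; first by rewrite invr0 ln0.
by rewrite ln_ge0 // invr_ge1 ?unitfE // lt_def r_neq0.
Qed.

Section esum_nonneg.
Context {R : realType} {T : choiceType}.
Local Open Scope ereal_scope.

Lemma gt0_fineK (e : \bar R) : (0 < fine e)%R -> (fine e)%:E = e.
Proof. by case: e => //=; rewrite ltxx. Qed.

Lemma esumZl (c : R) (A : set T) (f : T -> \bar R) : (0 <= c)%R ->
  (forall x, 0 <= f x) ->
  \esum_(i in A) (c%:E * f i) = c%:E * \esum_(i in A) f i.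
Proof.
move=> c_ge0 f_ge0; have [->|c_neq0] := eqVneq c 0%R.
  by rewrite mul0e esum1// => i _; rewrite mul0e.
have c_gt0 : (0 < c)%R by rewrite lt_def c_neq0.
rewrite /esum -ereal_sup_pZl//; congr ereal_sup.
apply/seteqP; split => y /=.
  by move=> [F FA <-]; exists (\sum_(i \in F) f i); [exists F|rewrite ge0_mule_fsumr].
by move=> [z [F FA <-] <-]; exists F => //; rewrite ge0_mule_fsumr.
Qed.

Lemma ge0_subset_esum (A B : set T) (f : T -> \bar R) : A `<=` B ->
  (forall x, 0 <= f x) -> \esum_(i in A) f i <= \esum_(i in B) f i.
Proof.
move=> AB f_ge0; rewrite (esumID A B) // setIidr //.
by rewrite leeDl // esum_ge0.
Qed.

End esum_nonneg.

Lemma esum_setXR {R : realType} {T1 T2 : choiceType} (A : set T1)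
    (J : T1 -> set T2) (f : T1 * T2 -> \bar R) : (forall w, (0 <= f w)%E) ->
  \esum_(w in A `*`` J) f w = \esum_(x in A) \esum_(y in J x) f (x, y).
Proof.
move=> f_ge0; rewrite esum_esum; last by move=> *; exact: f_ge0.
by apply: eq_esum => -[].
Qed.

Lemma esum_sections {R : realType} {T1 T2 : choiceType} (S : set (T1 * T2))
    (f : T1 * T2 -> \bar R) : (forall w, (0 <= f w)%E) ->
  \esum_(w in S) f w =
  \esum_(x in [set: T1]) \esum_(y in [set y | S (x, y)]) f (x, y).
Proof.
move=> f_ge0; rewrite -esum_setXR //; congr esum.
by apply/seteqP; split=> [[x y] Sxy|[x y] [_ Sxy]].
Qed.

Section markov.
Context {R : realType} {T : choiceType}.
Variables p Z : T -> R.
Hypotheses (p_ge0 : forall w, (0 <= p w)%R) (Z_ge0 : forall w, (0 <= Z w)%R).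
Local Open Scope ereal_scope.
Local Notation Pr A := (\esum_(w in A) (p w)%:E).
Local Notation Ex A := (\esum_(w in A) (p w * Z w)%:E).
(* Written with [`|Z w|], as in [tailZ], although [Z] is nonnegative. *)
Local Notation Tail u :=
  (\esum_(w in [set w | (u <= `|Z w|)%R]) (p w * `|Z w|)%:E).

Let pE w : 0 <= (p w)%:E. Proof. by rewrite lee_fin. Qed.
Let pZE w : 0 <= (p w * Z w)%:E. Proof. by rewrite lee_fin mulr_ge0. Qed.

Let TailE u : Tail u = Ex [set w | (u <= `|Z w|)%R].
Proof. by apply: eq_esum => w _; rewrite ger0_norm. Qed.

Lemma Ex_le_mul_Pr (A : set T) (c : R) : (0 <= c)%R ->
  (forall w, A w -> Z w <= c)%R -> Ex A <= c%:E * Pr A.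
Proof.
move=> c_ge0 Zc; rewrite -(esumZl _ _ _ c_ge0 pE).
by apply: le_esum => w Aw; rewrite -EFinM lee_fin [leRHS]mulrC ler_wpM2l // Zc.
Qed.

Lemma mul_Pr_le_Ex (A : set T) (c : R) : (0 <= c)%R ->
  (forall w, A w -> c <= Z w)%R -> c%:E * Pr A <= Ex A.
Proof.
move=> c_ge0 cZ; rewrite -(esumZl _ _ _ c_ge0 pE).
by apply: le_esum => w Aw; rewrite -EFinM lee_fin [leLHS]mulrC ler_wpM2l // cZ.
Qed.

Lemma Ex_le_Pr_add_tail (A : set T) (u : R) : (0 <= u)%R ->
  Ex A <= u%:E * Pr A + Tail u.
Proof.
move=> u_ge0; rewrite TailE.
rewrite (esumID [set w | (u <= `|Z w|)%R] _ _ (fun w _ => pZE w)).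
rewrite addeC; apply: leeD; last exact: ge0_subset_esum.
apply: le_trans (Ex_le_mul_Pr _ _ u_ge0 _) _.
  move=> w [_ /negP]; rewrite -ltNge ger0_norm //; exact: ltW.
by apply: lee_wpmul2l; [rewrite lee_fin|exact: ge0_subset_esum].
Qed.

Hypothesis p1 : Pr [set: T] = 1.

Lemma Pr_le1 (A : set T) : Pr A <= 1.
Proof. by rewrite -p1; exact: ge0_subset_esum. Qed.

Lemma Ex_le_add_Pr_tail (c u : R) : (0 <= c)%R -> (0 <= u)%R ->
  Ex [set: T] <= c%:E + u%:E * Pr [set w | (c < Z w)%R] + Tail u.
Proof.
move=> c_ge0 u_ge0; rewrite (esumID [set w | (c < Z w)%R] _ _ (fun w _ => pZE w)).
rewrite !setTI -addeA [leLHS]addeC; apply: leeD; last exact: Ex_le_Pr_add_tail.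
apply: le_trans (Ex_le_mul_Pr _ _ c_ge0 _) _; first by move=> w /negP; rewrite -leNgt.
by rewrite -[leRHS]mule1; apply: lee_wpmul2l; [rewrite lee_fin|exact: Pr_le1].
Qed.

Lemma le_tail_add_Pr (u b b' : R) : (0 <= b)%R -> (u <= b)%R -> (b <= b')%R ->
  b%:E <= Tail u + b%:E * Pr [set w | (Z w < b')%R].
Proof.
move=> b_ge0 ub bb'; rewrite TailE.
rewrite -[leLHS]mule1 -p1 (esumID [set w | (Z w < b')%R] _ _ (fun w _ => pE w)).
rewrite !setTI ge0_muleDr ?esum_ge0 // [leLHS]addeC; apply: leeD => //.
apply: le_trans (mul_Pr_le_Ex _ _ b_ge0 _) _.
  by move=> w /negP; rewrite -leNgt; exact: le_trans.
apply: ge0_subset_esum => // w /negP; rewrite -leNgt /= ger0_norm // => b'Z.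
exact: le_trans ub (le_trans bb' b'Z).
Qed.

Lemma le_Ex_add_Pr (c c' : R) : (0 <= c)%R -> (c <= c')%R ->
  c%:E <= Ex [set: T] + c%:E * Pr [set w | (Z w < c')%R].
Proof.
move=> c_ge0 cc'; have := @le_tail_add_Pr 0%R c c' c_ge0 c_ge0 cc'.
rewrite TailE (_ : [set w | (0 <= `|Z w|)%R] = [set: T]) //.
by apply/seteqP; split => // w _; exact: normr_ge0.
Qed.

End markov.

Section ereal_cvg.
Context {R : realType} {T : Type} {F : set_system T} {FF : Filter F}.
Local Open Scope ereal_scope.

Lemma cvge0_near_le (f : T -> \bar R) : f x @[x --> F] --> 0 ->
  forall d : R, (0 < d)%R -> \forall x \near F, f x <= d%:E.
Proof.
move=> /fine_cvgP [f_fin f_cvg] d d_gt0.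
move/cvgrPdist_le : f_cvg => /(_ d d_gt0).
move: f_fin; apply: filterS2 => x fx /=; rewrite sub0r normrN => fx_le.
by rewrite -(fineK fx) lee_fin (le_trans (ler_norm _)).
Qed.

Lemma cvge_near_bounds (f : T -> \bar R) (a : R) :
  (forall e : R, (0 < e)%R -> \forall x \near F, (a - e)%:E <= f x) ->
  (forall e : R, (0 < e)%R -> \forall x \near F, f x <= (a + e)%:E) ->
  f x @[x --> F] --> a%:E.
Proof.
move=> f_ge f_le.
have f_fin : \forall x \near F, f x \is a fin_num.
  move: (f_ge _ ltr01) (f_le _ ltr01); apply: filterS2 => x f_ge1 f_le1.
  by rewrite fin_numElt (lt_le_trans _ f_ge1) ?ltNyr // (le_lt_trans f_le1) ?ltry.
apply/fine_cvgP; split => //; apply/cvgrPdist_le => e e_gt0.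
move: (f_ge _ e_gt0) (f_le _ e_gt0) f_fin; apply: filterS3 => x + + fx.
by rewrite -(fineK fx) !lee_fin /= => f_ge_e f_le_e; rewrite distrC ler_distl f_ge_e.
Qed.

End ereal_cvg.

Section source.
Context {R : realType} {X Y : countType} (P : source R X Y).
Hypotheses (P_src : is_source P) (P_pos : positive_marginals P).
Local Open Scope ereal_scope.

Lemma P_ge0 n w : (0 <= P n w)%R.
Proof. by case: (P_src n) => + _; apply. Qed.

Lemma esum_P n : \esum_(w in [set: n.-tuple X * n.-tuple Y]) (P n w)%:E = 1.
Proof. by case: (P_src n). Qed.

Lemma PX_gt0 n (x : n.-tuple X) : (0 < PX P x)%R.
Proof. by case: (P_pos n) => + _; apply. Qed.

Lemma PY_gt0 n (y : n.-tuple Y) : (0 < PY P y)%R.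
Proof. by case: (P_pos n) => _; apply. Qed.

Lemma PX_esum n (x : n.-tuple X) :
  (PX P x)%:E = \esum_(y in [set: n.-tuple Y]) (P n (x, y))%:E.
Proof. exact/gt0_fineK/PX_gt0. Qed.

Lemma PY_esum n (y : n.-tuple Y) :
  (PY P y)%:E = \esum_(x in [set: n.-tuple X]) (P n (x, y))%:E.
Proof. exact/gt0_fineK/PY_gt0. Qed.

Lemma P_le_PY n x (y : n.-tuple Y) : (P n (x, y) <= PY P y)%R.
Proof.
rewrite -lee_fin PY_esum -(@esum_set1 _ _ x (fun x => (P n (x, y))%:E)) ?lee_fin ?P_ge0 //.
by apply: ge0_subset_esum => // ?; rewrite lee_fin P_ge0.
Qed.

Lemma info_ge0 n (x : n.-tuple X) y : (0 <= log2 (PXgY P x y)^-1)%R.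
Proof.
apply: log2_inv_ge0; first by rewrite divr_ge0 ?P_ge0 // ltW // PY_gt0.
by rewrite ler_pdivrMr ?PY_gt0 // mul1r P_le_PY.
Qed.

Lemma Zn_ge0 n (w : n.-tuple X * n.-tuple Y) : (0 <= Zn P w)%R.
Proof. by rewrite mulr_ge0 ?info_ge0. Qed.

Lemma PYgX_ge0 n (x : n.-tuple X) y : (0 <= PYgX P y x)%R.
Proof. by rewrite divr_ge0 ?P_ge0 // ltW // PX_gt0. Qed.

Lemma esum_P_PYgX n (x : n.-tuple X) (B : set (n.-tuple Y)) :
  \esum_(y in B) (P n (x, y))%:E = (PX P x)%:E * \esum_(y in B) (PYgX P y x)%:E.
Proof.
rewrite -esumZl; [|exact/ltW/PX_gt0|by move=> y; rewrite lee_fin PYgX_ge0].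
by apply: eq_esum => y _; rewrite -EFinM /PYgX mulrC divfK // gt_eqF // PX_gt0.
Qed.

Lemma esum_PYgX n (x : n.-tuple X) :
  \esum_(y in [set: n.-tuple Y]) (PYgX P y x)%:E = 1.
Proof.
under eq_esum do rewrite /PYgX mulrC EFinM.
rewrite esumZl; [|by rewrite invr_ge0 ltW // PX_gt0|by move=> y; rewrite lee_fin P_ge0].
by rewrite -PX_esum -EFinM mulVf // gt_eqF // PX_gt0.
Qed.

Lemma esum_PX n : \esum_(x in [set: n.-tuple X]) (PX P x)%:E = 1.
Proof.
rewrite -(esum_P n) (esum_sections _ (fun w => (P n w)%:E)); last first.
  by move=> w; rewrite lee_fin P_ge0.
by apply: eq_esum => x _; rewrite PX_esum.
Qed.

Lemma PrZ_sections n (A : set R) : PrZ P n A =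
  \esum_(x in [set: n.-tuple X]) \esum_(y in [set y | A (Zn P (x, y))]) (P n (x, y))%:E.
Proof. by rewrite /PrZ esum_sections // => w; rewrite lee_fin P_ge0. Qed.

Lemma ncondH_esum n : (n%:R^-1)%:E * condH P n =
  \esum_(w in [set: n.-tuple X * n.-tuple Y]) (P n w * Zn P w)%:E.
Proof.
rewrite /condH -esumZl; first last.
- by move=> w; rewrite lee_fin mulr_ge0 ?P_ge0 ?info_ge0.
- by rewrite invr_ge0.
by apply: eq_esum => w _; rewrite -EFinM /Zn mulrCA.
Qed.

Lemma condH_upper n (c u : R) : (0 <= c)%R -> (0 <= u)%R ->
  (n%:R^-1)%:E * condH P n <=
  c%:E + u%:E * PrZ P n [set z | (c < z)%R] + tailZ P n u.
Proof.
rewrite ncondH_esum.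
exact: (Ex_le_add_Pr_tail (P n) (fun w => Zn P w) (P_ge0 n) (Zn_ge0 n) (esum_P n)).
Qed.

Lemma condH_lower n (c c' : R) : (0 <= c)%R -> (c <= c')%R ->
  c%:E <= (n%:R^-1)%:E * condH P n + c%:E * PrZ P n [set z | (z < c')%R].
Proof.
rewrite ncondH_esum.
exact: (le_Ex_add_Pr (P n) (fun w => Zn P w) (P_ge0 n) (Zn_ge0 n) (esum_P n)).
Qed.

Lemma tailZ_lower n (u b b' : R) : (0 <= b)%R -> (u <= b)%R -> (b <= b')%R ->
  b%:E <= tailZ P n u + b%:E * PrZ P n [set z | (z < b')%R].
Proof. exact: (le_tail_add_Pr (P n) (fun w => Zn P w) (P_ge0 n) (Zn_ge0 n) (esum_P n)). Qed.

Section conditional_quantile.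
Variable eps : R.
Hypotheses (eps_gt0 : (0 < eps)%R) (eps_lt1 : (eps < 1)%R).
Local Notation info x y := (log2 (PXgY P x y)^-1).
Local Notation info_tail x a :=
  (\esum_(y in [set y | (a < info x y)%R]) (PYgX P y x)%:E).

Local Notation nHs_term n x := ((n%:R^-1)%:E * ((PX P x)%:E * hbar P eps x)).

Let PYgX_ge0E n (x : n.-tuple X) y : 0 <= (PYgX P y x)%:E.
Proof. by rewrite lee_fin PYgX_ge0. Qed.

Lemma hbar_ge0 n (x : n.-tuple X) : 0 <= hbar P eps x.
Proof.
apply: le_ereal_inf_tmp => _ [a /= tail_le <-]; rewrite lee_fin leNgt.
apply/negP => a_lt0; move: tail_le.
rewrite (_ : [set y | _] = setT); last first.
  by apply/seteqP; split => // y _ /=; apply: lt_le_trans a_lt0 (info_ge0 _ _ _).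
by rewrite esum_PYgX lee_fin leNgt eps_lt1.
Qed.

Lemma nHs_term_ge0 n (x : n.-tuple X) : 0 <= nHs_term n x.
Proof. by rewrite mule_ge0 ?mule_ge0 ?hbar_ge0 // lee_fin ?invr_ge0 // ltW // PX_gt0. Qed.

Lemma hbar_le n (x : n.-tuple X) (a : R) :
  info_tail x a <= eps%:E -> hbar P eps x <= a%:E.
Proof. by move=> tail_le; apply: ereal_inf_lbound; exists a. Qed.

Lemma info_tail_le n (x : n.-tuple X) (a : R) :
  hbar P eps x < a%:E -> info_tail x a <= eps%:E.
Proof.
move=> /ereal_inf_lt [_ [a' /= tail_le <-]]; rewrite lte_fin => a'a.
apply: le_trans tail_le.
by apply: ge0_subset_esum => y /=; [exact: lt_trans|exact: PYgX_ge0E].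
Qed.

Lemma le_Pr_info_le n (x : n.-tuple X) (a : R) : hbar P eps x < a%:E ->
  (1 - eps)%:E <= \esum_(y in [set y | (info x y <= a)%R]) (PYgX P y x)%:E.
Proof.
move=> /info_tail_le tail_le; rewrite EFinB leeBlDr //.
rewrite -(esum_PYgX _ x).
rewrite (esumID [set y | (a < info x y)%R] _ _ (fun y _ => PYgX_ge0E _ x y)).
rewrite !setTI [leLHS]addeC; apply: leeD => //.
apply: ge0_subset_esum => y; last exact: PYgX_ge0E.
by move=> /negP; rewrite -leNgt.
Qed.

(* Markov's inequality for the conditional law of [info x] given [X^n = x]. *)
Lemma mul_hbar_le_Ex n (x : n.-tuple X) :
  eps%:E * hbar P eps x <=
  \esum_(y in [set: n.-tuple Y]) (PYgX P y x * info x y)%:E.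
Proof.
have : 0 <= \esum_(y in [set: n.-tuple Y]) (PYgX P y x * info x y)%:E.
  by apply: esum_ge0 => y _; rewrite lee_fin mulr_ge0 ?PYgX_ge0 ?info_ge0.
case Em : (\esum_(y in _) _) => [m||] // m_ge0; last by rewrite leey.
rewrite lee_fin in m_ge0; apply/lee_addgt0Pr => d d_gt0.
set a := ((m + d) / eps)%R.
have a_gt0 : (0 < a)%R by rewrite divr_gt0 // ltr_wpDl.
have : hbar P eps x <= a%:E.
  apply: hbar_le; rewrite -(@lee_pmul2l _ a%:E) ?lte_fin //.
  apply: le_trans (_ : m%:E <= _); last first.
    by rewrite -EFinM lee_fin /a divfK ?gt_eqF // lerDl ltW.
  rewrite -Em; apply: le_trans (mul_Pr_le_Ex _ (fun y => info x y) (PYgX_ge0 _ x)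
    [set y | (a < info x y)%R] _ (ltW a_gt0) (fun y => @ltW _ _ _ _)) _.
  by apply: ge0_subset_esum => // y; rewrite lee_fin mulr_ge0 ?PYgX_ge0 ?info_ge0.
move=> hbar_le_a; rewrite -EFinD (_ : (m + d)%R = (eps * a)%R).
  by rewrite EFinM lee_wpmul2l // lee_fin ltW.
by rewrite /a mulrC divfK // gt_eqF.
Qed.

Lemma PX_mul_nscaleE n (x : n.-tuple X) (c : R) : (0 < n)%N ->
  (n%:R^-1)%:E * ((PX P x)%:E * (n%:R * c)%:E) = (c * PX P x)%:E.
Proof.
move=> n_gt0; rewrite -!EFinM; congr (_%:E).
by field; rewrite pnatr_eq0 -lt0n.
Qed.

Lemma nHs_term_le_Ex n (x : n.-tuple X) : (0 < n)%N ->
  nHs_term n x <=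
  (eps^-1)%:E * \esum_(y in [set: n.-tuple Y]) (P n (x, y) * Zn P (x, y))%:E.
Proof.
move=> n_gt0; have PX_gt0x := PX_gt0 _ x.
have n_gt0' : (0 < n%:R :> R)%R by rewrite ltr0n.
have -> : nHs_term n x =
    (eps^-1)%:E * ((n%:R^-1 * PX P x)%:E * (eps%:E * hbar P eps x)).
  rewrite !muleA -!EFinM; congr (_ * _); congr (_%:E).
  by rewrite [RHS]mulrAC mulVf ?mul1r // gt_eqF.
apply: lee_wpmul2l; first by rewrite lee_fin invr_ge0 ltW.
apply: le_trans (lee_wpmul2l _ (mul_hbar_le_Ex _ x)) _.
  by rewrite lee_fin mulr_ge0 ?invr_ge0 // ltW.
rewrite -esumZl; first last.
- by move=> y; rewrite lee_fin mulr_ge0 ?PYgX_ge0 ?info_ge0.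
- by rewrite mulr_ge0 ?invr_ge0 // ltW.
rewrite (eq_esum (b := fun y => (P n (x, y) * Zn P (x, y))%:E)) ?lexx // => y _.
rewrite -EFinM /Zn /PYgX /=; congr (_%:E).
by field; rewrite !gt_eqF.
Qed.

Lemma nHs_term_lower n (x : n.-tuple X) (c c' : R) :
  (0 < n)%N -> (0 <= c)%R -> (c < c')%R ->
  (c * PX P x)%:E <= nHs_term n x +
    (c / (1 - eps))%:E *
      \esum_(y in [set y | (Zn P (x, y) < c')%R]) (P n (x, y))%:E.
Proof.
move=> n_gt0 c_ge0 cc'.
have n_gt0' : (0 < n%:R :> R)%R by rewrite ltr0n.
have PX_ge0 : 0 <= (PX P x)%:E by rewrite lee_fin ltW // PX_gt0.
have [hbar_ge|hbar_lt] := leP (n%:R * c)%:E (hbar P eps x).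
  rewrite -[leLHS]adde0; apply: leeD; last first.
    rewrite mule_ge0 ?lee_fin ?divr_ge0 ?subr_ge0 ?(ltW eps_lt1) //.
    by apply: esum_ge0 => y _; rewrite lee_fin P_ge0.
  rewrite -(PX_mul_nscaleE _ x c n_gt0).
  by apply: lee_wpmul2l; [rewrite lee_fin invr_ge0|exact: lee_wpmul2l].
rewrite -[leLHS]add0e; apply: leeD; first exact: nHs_term_ge0.
have -> : (c * PX P x)%:E = (c / (1 - eps))%:E * ((PX P x)%:E * (1 - eps)%:E).
  by rewrite -!EFinM; congr (_%:E); field; rewrite subr_eq0 gt_eqF.
apply: lee_wpmul2l; first by rewrite lee_fin divr_ge0 // subr_ge0 ltW.
rewrite esum_P_PYgX; apply: lee_wpmul2l => //.
apply: le_trans (le_Pr_info_le _ _ _ hbar_lt) _.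
apply: ge0_subset_esum => y; last exact: PYgX_ge0E.
move=> /= info_le; rewrite /Zn /=; apply: le_lt_trans cc'.
by rewrite ler_pdivrMl.
Qed.

Lemma nHs_esum n : (n%:R^-1)%:E * Hs P eps n =
  \esum_(x in [set: n.-tuple X]) nHs_term n x.
Proof.
rewrite /Hs esumZl ?invr_ge0 // => x.
by rewrite mule_ge0 ?hbar_ge0 // lee_fin ltW // PX_gt0.
Qed.

Lemma Hs_lower n (c c' : R) : (0 < n)%N -> (0 <= c)%R -> (c < c')%R ->
  c%:E <= (n%:R^-1)%:E * Hs P eps n +
          (c / (1 - eps))%:E * PrZ P n [set z | (z < c')%R].
Proof.
move=> n_gt0 c_ge0 cc'.
have ceps_ge0 : (0 <= c / (1 - eps))%R by rewrite divr_ge0 // subr_ge0 ltW.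
rewrite nHs_esum PrZ_sections -esumZl; first last.
- by move=> x; apply: esum_ge0 => y _; rewrite lee_fin P_ge0.
- exact: ceps_ge0.
rewrite -esumD; first last.
- by move=> x _; rewrite mule_ge0 ?lee_fin // esum_ge0 // => y _; rewrite lee_fin P_ge0.
- by move=> x _; exact: nHs_term_ge0.
rewrite -[leLHS]mule1 -(esum_PX n) -esumZl; first last.
- by move=> x; rewrite lee_fin ltW // PX_gt0.
- exact: c_ge0.
by apply: le_esum => x _; rewrite -EFinM; exact: nHs_term_lower.
Qed.

Definition atypical n (c : R) : set (n.-tuple X) :=
  [set x | eps%:E < info_tail x (n%:R * c)].

Lemma nHs_term_le_typical n (x : n.-tuple X) (c : R) : (0 < n)%N ->
  ~ atypical n c x -> nHs_term n x <= (c * PX P x)%:E.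
Proof.
move=> n_gt0 /negP; rewrite -leNgt => /hbar_le hbar_le_nc.
rewrite -(PX_mul_nscaleE _ x c n_gt0).
apply: lee_wpmul2l; first by rewrite lee_fin invr_ge0.
by apply: lee_wpmul2l => //; rewrite lee_fin ltW // PX_gt0.
Qed.

Lemma PX_le_atypical n (x : n.-tuple X) (c : R) : (0 < n)%N -> atypical n c x ->
  (PX P x)%:E <=
  (eps^-1)%:E * \esum_(y in [set y | (c < Zn P (x, y))%R]) (P n (x, y))%:E.
Proof.
move=> n_gt0 atyp; rewrite esum_P_PYgX muleCA -[leLHS]mule1.
apply: lee_wpmul2l; first by rewrite lee_fin ltW // PX_gt0.
rewrite -(@lee_pmul2l _ eps%:E) ?lte_fin // mule1 muleA -EFinM mulfV ?gt_eqF // mul1e.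
apply: le_trans (ltW atyp) _; apply: ge0_subset_esum => y; last exact: PYgX_ge0E.
by rewrite /= /Zn /= ltr_pdivlMl // ltr0n.
Qed.

Lemma Pr_atypical_le n (c : R) : (0 < n)%N ->
  \esum_(w in atypical n c `*`` (fun=> [set: n.-tuple Y])) (P n w)%:E <=
  (eps^-1)%:E * PrZ P n [set z | (c < z)%R].
Proof.
move=> n_gt0; rewrite esum_setXR; last by move=> w; rewrite lee_fin P_ge0.
under eq_esum do rewrite -PX_esum.
apply: le_trans (le_esum (fun x => PX_le_atypical _ x c n_gt0)) _.
rewrite esumZl; first last.
- by move=> x; apply: esum_ge0 => y _; rewrite lee_fin P_ge0.
- by rewrite invr_ge0 ltW.
apply: lee_wpmul2l; first by rewrite lee_fin invr_ge0 ltW.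
rewrite PrZ_sections; apply: ge0_subset_esum => // x.
by apply: esum_ge0 => y _; rewrite lee_fin P_ge0.
Qed.

Lemma Hs_upper n (c u : R) : (0 < n)%N -> (0 <= c)%R -> (0 <= u)%R ->
  (n%:R^-1)%:E * Hs P eps n <=
  c%:E + (eps^-1)%:E * ((u / eps)%:E * PrZ P n [set z | (c < z)%R] + tailZ P n u).
Proof.
move=> n_gt0 c_ge0 u_ge0.
have eps_inv_ge0 : (0 <= eps^-1)%R by rewrite invr_ge0 ltW.
rewrite nHs_esum (esumID (atypical n c)); last by move=> x _; exact: nHs_term_ge0.
rewrite !setTI [leLHS]addeC; apply: leeD.
  apply: le_trans (le_esum (fun x => nHs_term_le_typical _ x c n_gt0)) _.
  under eq_esum do rewrite EFinM.
  rewrite esumZl //; last by move=> x; rewrite lee_fin ltW // PX_gt0.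
  rewrite -[leRHS]mule1; apply: lee_wpmul2l; first by rewrite lee_fin.
  rewrite -(esum_PX n); apply: ge0_subset_esum => // x.
  by rewrite lee_fin ltW // PX_gt0.
apply: le_trans (le_esum (fun x _ => nHs_term_le_Ex _ x n_gt0)) _.
rewrite esumZl //; last first.
  by move=> x; apply: esum_ge0 => y _; rewrite lee_fin mulr_ge0 ?P_ge0 ?Zn_ge0.
apply: lee_wpmul2l; first by rewrite lee_fin.
rewrite -(esum_setXR _ _ (fun w => (P n w * Zn P w)%:E)); last first.
  by move=> w; rewrite lee_fin mulr_ge0 ?P_ge0 ?Zn_ge0.
apply: le_trans
  (Ex_le_Pr_add_tail (P n) (fun w => Zn P w) (P_ge0 n) (Zn_ge0 n) _ _ u_ge0) _.
apply: leeD2r; rewrite EFinM -muleA; apply: lee_wpmul2l; first by rewrite lee_fin.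
exact: Pr_atypical_le.
Qed.

End conditional_quantile.

Section limits.

Lemma near_PrZ_gt (c d : R) : Hup P < c%:E -> (0 < d)%R ->
  \forall n \near \oo, PrZ P n [set z | (c < z)%R] <= d%:E.
Proof.
move=> /ereal_inf_lt [_ [a /= Pr_cvg <-]]; rewrite lte_fin => ac d_gt0.
near=> n; apply: le_trans (_ : _ <= PrZ P n [set z | (a < z)%R]) _.
  apply: ge0_subset_esum => w /=; [exact: lt_trans ac|by rewrite lee_fin P_ge0].
near: n; exact: cvge0_near_le.
Unshelve. all: by end_near. Qed.

Lemma near_PrZ_lt (c d : R) : c%:E < Hlow P -> (0 < d)%R ->
  \forall n \near \oo, PrZ P n [set z | (z < c)%R] <= d%:E.
Proof.
move=> /ereal_sup_gt [_ [b /= Pr_cvg <-]]; rewrite lte_fin => cb d_gt0.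
near=> n; apply: le_trans (_ : _ <= PrZ P n [set z | (z < b)%R]) _.
  apply: ge0_subset_esum => w /=; last by rewrite lee_fin P_ge0.
  by move=> Zc; exact: lt_trans Zc cb.
near: n; exact: cvge0_near_le.
Unshelve. all: by end_near. Qed.

Lemma Hlow_ge0 : 0 <= Hlow P.
Proof.
apply: ereal_sup_ubound; exists 0%R => //=.
apply: cvg_near_cst; apply: nearW => n.
rewrite /PrZ esum1 // => w /= Zw_lt0.
by have := Zn_ge0 n w; rewrite leNgt Zw_lt0.
Qed.

Hypothesis P_ui : uniformly_integrable P.

Lemma tailZ_unif_le (d : R) : (0 < d)%R ->
  exists2 u : R, (0 <= u)%R & forall n, tailZ P n u <= d%:E.
Proof.
move=> d_gt0; have [M [_ tail_le]] := cvge0_near_le _ P_ui _ d_gt0.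
exists (`|M| + 1)%R; first by rewrite addr_ge0.
move=> n; apply: le_trans (tail_le (`|M| + 1)%R _); last first.
  by apply: le_lt_trans (ler_norm M) _; rewrite ltrDl.
by apply: ereal_sup_ubound; exists n.
Qed.

(* Otherwise [b <= tailZ P n u + b * PrZ P n [set z | z < b'] <= 1 + b / 2]
   for [b := u + 4], some [b' > b] and [n] large. *)
Lemma Hlow_lt_pinfty : Hlow P < +oo.
Proof.
rewrite ltNge leye_eq; apply/negP => /eqP Hlow_oo.
have [u u_ge0 tail_le1] := @tailZ_unif_le 1%R ltr01.
set b := (u + 4)%R.
have b_ge0 : (0 <= b)%R by rewrite /b; lra.
have ub : (u <= b)%R by rewrite /b; lra.
have : b%:E < Hlow P by rewrite Hlow_oo ltry.
move=> /ereal_sup_gt [_ [b' Pr_cvg <-]]; rewrite lte_fin => bb'.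
have half_gt0 : (0 < 1 / 2 :> R)%R by rewrite divr_gt0.
have [n Pr_le] := filter_ex (cvge0_near_le _ Pr_cvg _ half_gt0).
have : b%:E <= 1%:E + b%:E * (1 / 2)%:E.
  apply: le_trans (tailZ_lower n _ _ _ b_ge0 ub (ltW bb'))
    (leeD (tail_le1 n) (lee_wpmul2l _ Pr_le)).
  by rewrite lee_fin.
by rewrite -EFinM -EFinD lee_fin /b; lra.
Qed.

Variable H : R.
Hypotheses (HupE : Hup P = H%:E) (HlowE : Hlow P = H%:E).

Lemma near_le_of_upper (f : nat -> \bar R) (beta : R) : (0 <= beta)%R ->
  (forall c u : R, (0 <= c)%R -> (0 <= u)%R -> exists2 alpha : R, (0 <= alpha)%R &
     forall n, (0 < n)%N ->
       f n <= c%:E + beta%:E * (alpha%:E * PrZ P n [set z | (c < z)%R] + tailZ P n u)) ->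
  forall e : R, (0 < e)%R -> \forall n \near \oo, f n <= (H + e)%:E.
Proof.
move=> beta_ge0 f_le e e_gt0.
have H_ge0 : (0 <= H)%R by rewrite -lee_fin -HlowE Hlow_ge0.
set delta := (e / 4 / (beta + 1))%R.
have delta_gt0 : (0 < delta)%R by rewrite !divr_gt0 //; lra.
have beta_delta : (beta * delta <= e / 4)%R by apply: mulr_divD1_le => //; lra.
have [u u_ge0 tail_le] := tailZ_unif_le _ delta_gt0.
have [alpha alpha_ge0 f_le_alpha] := f_le (H + e / 2)%R u (ltac:(lra)) u_ge0.
have alpha_delta : (alpha * (delta / (alpha + 1)) <= delta)%R.
  by apply: mulr_divD1_le => //; exact: ltW.
near=> n.
have n_gt0 : (0 < n)%N by near: n; exact: nbhs_infty_gt.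
have Pr_small : alpha%:E * PrZ P n [set z | (H + e / 2 < z)%R] <=
                (alpha * (delta / (alpha + 1)))%:E.
  rewrite EFinM; apply: lee_wpmul2l; first by rewrite lee_fin.
  near: n; apply: near_PrZ_gt; first by rewrite HupE lte_fin; lra.
  by rewrite divr_gt0 //; lra.
apply: le_trans (f_le_alpha n n_gt0) _.
apply: le_trans (leeD2l _ (lee_wpmul2l _ (leeD Pr_small (tail_le n)))) _.
  by rewrite lee_fin.
rewrite -[X in beta%:E * X]EFinD -EFinM -EFinD lee_fin.
have : (beta * (alpha * (delta / (alpha + 1)) + delta) <= beta * (delta + delta))%R.
  by apply: ler_wpM2l => //; lra.
lra.
Unshelve. all: by end_near. Qed.

Lemma near_ge_of_lower (f : nat -> \bar R) : (forall n, 0 <= f n) ->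
  (forall c c' : R, (0 <= c)%R -> (c < c')%R -> exists2 gamma : R, (0 <= gamma)%R &
     forall n, (0 < n)%N -> c%:E <= f n + gamma%:E * PrZ P n [set z | (z < c')%R]) ->
  forall e : R, (0 < e)%R -> \forall n \near \oo, (H - e)%:E <= f n.
Proof.
move=> f_ge0 f_ge e e_gt0.
have [H_lt|H_ge] := ltrP (H - e / 2) 0.
  by near=> n; apply: le_trans (f_ge0 n); rewrite lee_fin; lra.
have [gamma gamma_ge0 f_ge_gamma] :=
  f_ge (H - e / 2)%R (H - e / 4)%R H_ge (ltac:(lra)).
have gamma_le : (gamma * (e / 2 / (gamma + 1)) <= e / 2)%R.
  by apply: mulr_divD1_le => //; lra.
near=> n.
have n_gt0 : (0 < n)%N by near: n; exact: nbhs_infty_gt.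
have Pr_small : gamma%:E * PrZ P n [set z | (z < H - e / 4)%R] <= (e / 2)%:E.
  apply: le_trans (_ : _ <= gamma%:E * (e / 2 / (gamma + 1))%:E) _.
    apply: lee_wpmul2l; first by rewrite lee_fin.
    near: n; apply: near_PrZ_lt; first by rewrite HlowE lte_fin; lra.
    by rewrite divr_gt0 //; lra.
  by rewrite -EFinM lee_fin.
have := le_trans (f_ge_gamma n n_gt0) (leeD2l _ Pr_small).
rewrite -leeBlDr // -EFinB => f_ge_H; apply: le_trans f_ge_H.
by rewrite lee_fin; lra.
Unshelve. all: by end_near. Qed.

Lemma condH_cvg : ((n%:R^-1)%:E * condH P n) @[n --> \oo] --> H%:E.
Proof.
apply: cvge_near_bounds.
  apply: near_ge_of_lower => [n|c c' c_ge0 cc'].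
    rewrite ncondH_esum //; apply: esum_ge0 => w _.
    by rewrite lee_fin mulr_ge0 ?P_ge0 ?Zn_ge0.
  by exists c => // n _; exact: condH_lower (ltW cc').
apply: (@near_le_of_upper _ 1%R) => // c u c_ge0 u_ge0.
by exists u => // n _; rewrite mul1e addeA; exact: condH_upper.
Qed.

Lemma Hs_cvg (eps : R) : (0 < eps)%R -> (eps < 1)%R ->
  ((n%:R^-1)%:E * Hs P eps n) @[n --> \oo] --> H%:E.
Proof.
move=> eps_gt0 eps_lt1; apply: cvge_near_bounds.
  apply: near_ge_of_lower => [n|c c' c_ge0 cc'].
    by rewrite nHs_esum //; apply: esum_ge0 => x _; exact: nHs_term_ge0.
  exists (c / (1 - eps))%R; first by rewrite divr_ge0 // subr_ge0 ltW.
  by move=> n n_gt0; exact: Hs_lower.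
apply: (@near_le_of_upper _ eps^-1); first by rewrite invr_ge0 ltW.
move=> c u c_ge0 u_ge0; exists (u / eps)%R; first by rewrite divr_ge0 // ltW.
by move=> n n_gt0; exact: Hs_upper.
Qed.

End limits.

End source.

Theorem theorem9 (R : realType) (X Y : countType) (P : source R X Y) :
  is_source P -> positive_marginals P ->
  uniformly_integrable P -> Hlow P = Hup P ->
  exists H : R,
    ((n%:R^-1)%:E * condH P n)%E @[n --> \oo] --> H%:E /\
    (forall eps : R, 0 < eps < 1 ->
       ((n%:R^-1)%:E * Hs P eps n)%E @[n --> \oo] --> H%:E).
Proof.
move=> P_src P_pos P_ui Hlow_eq_Hup.
have Hlow_fin : Hlow P \is a fin_num.
  by rewrite ge0_fin_numE ?Hlow_ge0 ?Hlow_lt_pinfty.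
have HlowE : Hlow P = (fine (Hlow P))%:E by rewrite fineK.
have HupE : Hup P = (fine (Hlow P))%:E by rewrite -Hlow_eq_Hup.
exists (fine (Hlow P)); split; first exact: condH_cvg.
by move=> eps /andP[eps_gt0 eps_lt1]; exact: Hs_cvg.
Qed.
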